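(* Let $H$ be a capacitated hypergraph with $n$ vertices, let $\alpha\ge0$, and let $H'$ be an $\alpha$-contraction of $H$ (with respect to some MA-ordering). Then $\text{sum-deg}(H')\le 2\alpha n$.
   Context: A hypergraph $H=(V,E)$ has finite vertex set $V$, a finite multiset $E$ of edges (subsets of $V$) and capacities $c:E\to\mathbb{R}_{\ge0}$; $\text{sum-deg}(H)=\sum_{e\in E}|e|c(e)$. For subsets $A_1,\ldots,A_k$, $d(A_1,\ldots,A_k)$ is the total capacity of edges meeting every $A_i$ (a vertex $v$ stands for $\{v\}$). For an ordering $v_1,\ldots,v_n$, $V_i=\{v_1,\ldots,v_i\}$; it is an MA-ordering if $d(V_{i-1},v_i)\ge d(V_{i-1},v_j)$ for all $1\le i<j\le n$. Given an MA-ordering and $\alpha\ge0$, a set of consecutive vertices $v_a,\ldots,v_b$ ($a\le b$) is $\alpha$-tight if $d(V_i,v_{i+1})\ge\alpha$ for all $a\le i<b$. The maximal $\alpha$-tight sets partition $V$; the $\alpha$-contraction contracts each maximal $\alpha$-tight set into a single vertex and discards edges that become singletons, keeping capacities. *)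

From HB Require Import structures.
From mathcomp Require Import all_boot all_order all_algebra.
Set Implicit Arguments. Unset Strict Implicit. Unset Printing Implicit Defensive.
Import Order.TTheory GRing.Theory Num.Theory.
Local Open Scope ring_scope.

(* A capacitated hypergraph on the finite vertex type V is given by a finite
   index type E of edges (so E encodes a finite multiset of edges),
   edge : E -> {set V} and capacities c : E -> R. *)

Section Hyp.
Variables (R : realFieldType) (V E : finType).
Variables (edge : E -> {set V}) (c : E -> R).

Definition dcap (As : seq {set V}) : R :=
  \sum_(e | all (fun A => edge e :&: A != set0) As) c e.

Definition sum_deg (T : finType) (P : pred E) (edg : E -> {set T}) : R :=
  \sum_(e | P e) #|edg e|%:R * c e.

(* An ordering v_1,...,v_n of V is a bijection ord : 'I_n -> V, with
   0-based positions: ord k is v_{k+1}. *)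
Variables (n : nat) (ord : 'I_n -> V).

Definition prefix (i : nat) : {set V} := [set ord k | k : 'I_n & (k < i)%N].

(* d(V_i, v_{i+1}) in the paper's 1-based notation, where v_{i+1} = ord i. *)
Definition dnext (i : 'I_n) : R := dcap [:: prefix i; [set ord i]].

Definition is_MA_ordering : Prop :=
  forall i j : 'I_n, (i < j)%N ->
    dcap [:: prefix i; [set ord j]] <= dcap [:: prefix i; [set ord i]].

Variable alpha : R.

(* {v_a,...,v_b} (a <= b) is alpha-tight if d(V_i, v_{i+1}) >= alpha for
   a <= i < b (1-based); with 0-based positions a', b' this says
   alpha <= dnext i for a' < i <= b'. *)
Definition tight (S : {set V}) : bool :=
  [exists a : 'I_n, exists b : 'I_n,
     [&& (a <= b)%N,
         S == [set ord k | k : 'I_n & (a <= k <= b)%N] &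
         [forall i : 'I_n, ((a < i <= b)%N) ==> (alpha <= dnext i)]]].

Definition maximal_tight (S : {set V}) : bool :=
  tight S && [forall T : {set V}, (tight T && (S \subset T)) ==> (T == S)].

Definition contr_vertices : {set {set V}} := [set S | maximal_tight S].

Definition contr_edge (e : E) : {set {set V}} :=
  [set B in contr_vertices | B :&: edge e != set0].

Definition contr_kept (e : E) : bool := (1 < #|contr_edge e|)%N.

Definition contr_sum_deg : R := sum_deg contr_kept contr_edge.

End Hyp.

(* Cut the MA-ordering v_1, ..., v_n at v_1 and at every v_s with
   d(V_{s-1}, v_s) < alpha.  Every maximal alpha-tight set is an interval of the
   ordering beginning at such a cut, and the maximal alpha-tight sets are pairwise
   disjoint.  If the block of v_j begins at the cut v_s, then by the MA property
   d(V_{s-1}, v_j) <= d(V_{s-1}, v_s) < alpha (and d(V_0, v_j) = 0).  Summing over j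
   counts every edge e with multiplicity N(e), the number of j such that v_j lies in e
   and e meets a block before that of v_j; hence sum_e N(e) c(e) <= alpha n.  An edge
   meeting k blocks has N(e) >= k - 1: every block met, except the one containing the
   first vertex of e, supplies such a j.  For the edges kept in the contraction k >= 2,
   so k <= 2 N(e), and sum-deg(H') <= 2 alpha n. *)

From Pilot Require Import Defs.
From HB Require Import structures.
From mathcomp Require Import all_boot all_order all_algebra.
From mathcomp Require Import zify.
Import Order.TTheory GRing.Theory Num.Theory.
Set Implicit Arguments. Unset Strict Implicit. Unset Printing Implicit Defensive.
Local Open Scope ring_scope.

Section Contraction.

Variables (R : realFieldType) (V E : finType).
Variables (edge : E -> {set V}) (c : E -> R).

Local Notation dcap := (dcap edge c).

Lemma sum_dcap (I : finType) (F : I -> seq {set V}) :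
  \sum_i dcap (F i) =
  \sum_e #|[set i | all (fun A => edge e :&: A != set0) (F i)]|%:R * c e.
Proof.
under eq_bigr do rewrite /Defs.dcap big_mkcond.
rewrite exchange_big; apply: eq_bigr => e _.
by rewrite -big_mkcond mulr_natl -sumr_const; apply: eq_bigl => i; rewrite inE.
Qed.

Variables (n : nat) (ord : 'I_n -> V) (alpha : R).
Hypothesis ord_inj : injective ord.

Local Notation prefix := (Defs.prefix ord).
Local Notation dnext := (dnext edge c ord).
Local Notation tight := (tight edge c ord alpha).
Local Notation maximal_tight := (maximal_tight edge c ord alpha).
Local Notation contr_vertices := (contr_vertices edge c ord alpha).
Local Notation contr_edge := (contr_edge edge c ord alpha).

Definition segment (a b : nat) : {set V} :=
  [set ord k | k : 'I_n & (a <= k <= b)%N].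

Definition tight_span (a b : nat) : Prop :=
  forall i : 'I_n, (a < i <= b)%N -> alpha <= dnext i.

Lemma mem_segment a b j : (ord j \in segment a b) = (a <= j <= b)%N.
Proof. by rewrite mem_imset // inE. Qed.

Lemma segmentP a b x :
  reflect (exists2 j : 'I_n, x = ord j & (a <= j <= b)%N) (x \in segment a b).
Proof.
apply: (iffP imsetP) => [[j] | [j xj hj]]; first by rewrite inE => hj ->; exists j.
by exists j; rewrite ?inE.
Qed.

Lemma segmentS a b a' b' :
  (a' <= a)%N -> (b <= b')%N -> segment a b \subset segment a' b'.
Proof.
move=> a'a bb'; apply/subsetP => _ /segmentP[j -> hj].
by rewrite mem_segment; lia.
Qed.

Lemma tightP S :
  tight S <-> exists a b, [/\ (a <= b < n)%N, S = segment a b & tight_span a b].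
Proof.
split.
- case/existsP => a /existsP[b /and3P[ab /eqP-> /forallP span]].
  by exists a, b; split=> [|//|i /(implyP (span i))]; rewrite ?ab ?ltn_ord.
- case=> a [b [/andP[ab bn] -> span]].
  have an : (a < n)%N := leq_ltn_trans ab bn.
  apply/existsP; exists (Ordinal an); apply/existsP; exists (Ordinal bn).
  rewrite /= ab eqxx; apply/forallP => i; apply/implyP; exact: span.
Qed.

Lemma tight_span_union a1 b1 a2 b2 j :
  (a1 <= j <= b1)%N -> (a2 <= j <= b2)%N ->
  tight_span a1 b1 -> tight_span a2 b2 -> tight_span (minn a1 a2) (maxn b1 b2).
Proof.
move=> j1 j2 span1 span2 i hi.
have [hi1|hi1] := boolP (a1 < i <= b1)%N; first exact: span1.
apply: span2; lia.
Qed.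

Lemma maximal_tight_max S T : maximal_tight S -> tight T -> S \subset T -> T = S.
Proof.
by case/andP => _ /forallP/(_ T)/implyP maxS tT sST; apply/eqP/maxS/andP.
Qed.

Lemma maximal_tight_eq B1 B2 x :
  maximal_tight B1 -> maximal_tight B2 -> x \in B1 -> x \in B2 -> B1 = B2.
Proof.
move=> max1 max2; have /tightP[a1 [b1 [ab1 E1 span1]]] := (andP max1).1.
have /tightP[a2 [b2 [ab2 E2 span2]]] := (andP max2).1.
move=> xB1 xB2; have /segmentP[j xj j1] : x \in segment a1 b1 by rewrite -E1.
have j2 : (a2 <= j <= b2)%N by rewrite -mem_segment -xj -E2.
have tightU : tight (segment (minn a1 a2) (maxn b1 b2)).
  apply/tightP; exists (minn a1 a2), (maxn b1 b2); split=> //; first lia.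
  exact: tight_span_union j1 j2 span1 span2.
rewrite -(maximal_tight_max max1 tightU); last by rewrite E1 segmentS ?geq_minl ?leq_maxl.
by apply: maximal_tight_max; rewrite // E2 segmentS ?geq_minr ?leq_maxr.
Qed.

Definition block_break (i : 'I_n) : bool := (i == 0 :> nat) || (dnext i < alpha).

Lemma maximal_tight_start B : maximal_tight B ->
  exists (a : 'I_n) b,
    [/\ (a <= b < n)%N, B = segment a b, tight_span a b & block_break a].
Proof.
move=> maxB; have /tightP[a [b [abn EB span]]] := (andP maxB).1.
have an : (a < n)%N by lia.
exists (Ordinal an), b; split=> //=; apply/negPn/negP.
rewrite negb_or -leNgt => /andP[/= a_gt0 alpha_le].
have tight_ext : tight (segment a.-1 b).
  apply/tightP; exists a.-1, b; split=> //; first lia.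
  move=> i hi; have [ia|] := eqVneq (i : nat) a; last by move=> ia; apply: span; lia.
  by have -> : i = Ordinal an by apply: val_inj.
have sub : B \subset segment a.-1 b by rewrite EB segmentS // leq_pred.
have /setP eqB := maximal_tight_max maxB tight_ext sub.
have a'n : (a.-1 < n)%N by lia.
have := eqB (ord (Ordinal a'n)); rewrite EB !mem_segment /=; lia.
Qed.

Definition block_start (j : 'I_n) : nat :=
  \max_(i : 'I_n | (i <= j)%N && block_break i) i.

Lemma block_startP j :
  exists2 s : 'I_n, (s : nat) = block_start j & (s <= j)%N && block_break s.
Proof.
have n_gt0 : (0 < n)%N by apply: leq_ltn_trans (ltn_ord j).
have [|s hs start_s] := @eq_bigmax_cond _ [pred i : 'I_n | (i <= j)%N && block_break i]
    (fun i => nat_of_ord i).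
  by apply/card_gt0P; exists (Ordinal n_gt0); rewrite inE /= /block_break eqxx.
by exists s; first exact: esym start_s.
Qed.

Lemma block_start_max (j i : 'I_n) :
  (i <= j)%N -> block_break i -> (i <= block_start j)%N.
Proof.
by move=> ij bi; apply: (leq_bigmax_cond (F := fun i : 'I_n => nat_of_ord i)); rewrite ij.
Qed.

Lemma block_start_segment (a : 'I_n) b (j : 'I_n) :
  block_break a -> tight_span a b -> (a <= j <= b)%N -> block_start j = a.
Proof.
move=> break_a span /andP[aj jb]; apply/eqP; rewrite eqn_leq block_start_max // andbT.
have [s <- /andP[sj]] := block_startP j.
rewrite /block_break leqNgt; apply: contraTN => a_lt_s.
by rewrite negb_or -leNgt span ?andbT; lia.
Qed.

Lemma prefix0 : prefix 0 = set0.
Proof. by apply/setP => x; rewrite inE; apply/imsetP => -[k]; rewrite inE ltn0. Qed.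

Lemma contr_vertex_ord B x : B \in contr_vertices -> x \in B -> exists j, x = ord j.
Proof.
rewrite inE => /andP[/tightP[a [b [_ -> _]]] _] /segmentP[j -> _]; by exists j.
Qed.

Definition reaches_back (e : E) (j : 'I_n) : bool :=
  all (fun A => edge e :&: A != set0) [:: prefix (block_start j); [set ord j]].

Lemma reaches_back_first e B (j0 j : 'I_n) :
  B \in contr_vertices -> ord j0 \in edge e -> ord j0 \notin B ->
  (forall k : 'I_n, ord k \in edge e -> (j0 <= k)%N) ->
  ord j \in B -> ord j \in edge e -> reaches_back e j.
Proof.
rewrite inE => /maximal_tight_start[a [b [abn EB span break_a]]] j0e j0B j0_first jB je.
have /andP[aj jb] : (a <= j <= b)%N by rewrite -mem_segment -EB.
have j0a : (j0 < a)%N by move: j0B (j0_first j je); rewrite EB mem_segment; lia.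
rewrite /reaches_back /= (block_start_segment break_a span) ?aj // andbT.
apply/andP; split; apply/set0Pn; last by exists (ord j); rewrite !inE je eqxx.
by exists (ord j0); rewrite inE j0e mem_imset // inE.
Qed.

Definition block_of (x : V) : {set V} :=
  odflt set0 [pick B in contr_vertices | x \in B].

Lemma block_ofE B x : B \in contr_vertices -> x \in B -> block_of x = B.
Proof.
rewrite inE => maxB xB; rewrite /block_of; case: pickP => [B' /andP[] | /(_ B)] /=.
  by rewrite inE => maxB' xB'; apply: maximal_tight_eq maxB' maxB xB' xB.
by rewrite inE maxB xB.
Qed.

Lemma card_contr_edge_le e :
  (#|contr_edge e| <= #|[set j | reaches_back e j]|.+1)%N.
Proof.
have [-> // | /card_gt0P[B0]] := posnP #|contr_edge e|.
rewrite inE => /andP[B0v /set0Pn[x /setIP[xB0 xe]]].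
have [k xk] := contr_vertex_ord B0v xB0; rewrite xk in xe.
have [j0 j0e j0_first] :=
  @arg_minnP _ k (fun j => ord j \in edge e) (fun j => nat_of_ord j) xe.
pose D := j0 |: [set j | reaches_back e j].
apply: (@leq_trans #|[set block_of (ord j) | j in D]|).
  apply/subset_leq_card/subsetP => B.
  rewrite inE => /andP[Bv /set0Pn[y /setIP[yB ye]]].
  have [j yj] := contr_vertex_ord Bv yB; rewrite yj in yB ye.
  have [j0B | j0B] := boolP (ord j0 \in B).
    by apply/imsetP; exists j0; rewrite ?setU11 ?(block_ofE Bv j0B).
  apply/imsetP; exists j; last by rewrite (block_ofE Bv yB).
  by rewrite !inE (reaches_back_first Bv j0e j0B j0_first yB ye) orbT.
apply: leq_trans (leq_imset_card _ _) _.
by rewrite cardsU1; case: (_ \notin _).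
Qed.

Hypothesis c_ge0 : forall e, 0 <= c e.

Lemma contr_sum_deg_le :
  contr_sum_deg edge c ord alpha
    <= 2 * \sum_e #|[set j | reaches_back e j]|%:R * c e.
Proof.
rewrite /contr_sum_deg /sum_deg mulr_sumr.
apply: (@le_trans _ _
  (\sum_(e | contr_kept edge c ord alpha e) 2 * (#|[set j | reaches_back e j]|%:R * c e))).
  apply: ler_sum => e kept; rewrite mulrA -natrM ler_wpM2r // ler_nat.
  by have := card_contr_edge_le e; move: kept; rewrite /contr_kept; lia.
rewrite [X in _ <= X](bigID (contr_kept edge c ord alpha)) /= lerDl.
by apply: sumr_ge0 => e _; rewrite !mulr_ge0.
Qed.

Hypothesis ord_MA : is_MA_ordering edge c ord.
Hypothesis alpha_ge0 : 0 <= alpha.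

Lemma dcap_block_start_le j : dcap [:: prefix (block_start j); [set ord j]] <= alpha.
Proof.
have [s <- /andP[sj]] := block_startP j; rewrite /block_break.
have [s0 _ | _ /= dnext_lt] := eqVneq (s : nat) 0.
  by rewrite s0 prefix0 /Defs.dcap big_pred0 // => e; rewrite /= setI0 eqxx.
apply: le_trans (ltW dnext_lt); rewrite /Defs.dnext.
have [/val_inj -> // | s_ne_j] := eqVneq (s : nat) j.
by apply: ord_MA; rewrite ltn_neqAle s_ne_j.
Qed.

End Contraction.

Theorem mainTheorem18 (R : realFieldType) (V E : finType)
    (edge : E -> {set V}) (c : E -> R) (n : nat) (ord : 'I_n -> V)
    (alpha : R) :
  (forall e, 0 <= c e) ->
  bijective ord ->
  is_MA_ordering edge c ord ->
  0 <= alpha ->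
  contr_sum_deg edge c ord alpha <= 2 * alpha * n%:R.
Proof.
move=> c_ge0 /bij_inj ord_inj ord_MA alpha_ge0.
apply: le_trans (contr_sum_deg_le edge alpha ord_inj c_ge0) _.
rewrite -sum_dcap -mulrA ler_wpM2l //.
apply: le_trans (ler_sum _ (fun j _ => dcap_block_start_le ord_MA alpha_ge0 j)) _.
by rewrite sumr_const card_ord mulr_natr.
Qed.
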